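(* Let $k_1,k_2$ be nonnegative integers with $k_1+k_2\ge1$, and let $0<x<1$. Then $$ {}_3F_2\!\left(\begin{matrix}1,\frac{k_1+k_2}{2}+1,\frac{k_1+k_2+1}{2}\\ k_1+1,k_2+1\end{matrix};x\right)=\frac{k_1!\,k_2!}{(k_1+k_2)!}\frac{2^{k_1+k_2}}{x^{k_2}}\frac{(1+\sqrt{1-x})^{k_2-k_1}}{\sqrt{1-x}}+\frac{k_2}{(k_1+k_2)\sqrt{1-x}}\left[{}_2F_1\!\left(\begin{matrix}1,k_1+k_2\\ k_1+1\end{matrix};\tfrac12-\tfrac12\sqrt{1-x}\right)-{}_2F_1\!\left(\begin{matrix}1,k_1+k_2\\ k_1+1\end{matrix};\tfrac12+\tfrac12\sqrt{1-x}\right)\right],$$ and $$ {}_3F_2\!\left(\begin{matrix}1,\frac{k_1+k_2}{2}+1,\frac{k_1+k_2+1}{2}\\ k_1+1,k_2+1\end{matrix};x\right)=\frac{1}{(k_1+k_2)\sqrt{1-x}}\left[k_2\,{}_2F_1\!\left(\begin{matrix}1,k_1+k_2\\ k_1+1\end{matrix};\tfrac12-\tfrac12\sqrt{1-x}\right)+k_1\,{}_2F_1\!\left(\begin{matrix}1,k_1+k_2\\ k_2+1\end{matrix};\tfrac12-\tfrac12\sqrt{1-x}\right)\right].$$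
   Context: For $|x|<1$, ${}_2F_1\!\left(\begin{matrix}a,b\\ d\end{matrix};x\right)=\sum_{n\ge0}\frac{(a)_n(b)_n}{(d)_n}\frac{x^n}{n!}$ and ${}_3F_2\!\left(\begin{matrix}a,b,c\\ d,e\end{matrix};x\right)=\sum_{n\ge0}\frac{(a)_n(b)_n(c)_n}{(d)_n(e)_n}\frac{x^n}{n!}$, with $(q)_0=1$, $(q)_n=q(q+1)\cdots(q+n-1)$. *)

From Stdlib Require Import Reals Factorial.
From Coquelicot Require Import Coquelicot.
Open Scope R_scope.

Fixpoint poch (q : R) (n : nat) : R :=
  match n with
  | O => 1
  | S m => poch q m * (q + INR m)
  end.

Definition F21 (a b d x : R) : R :=
  Series (fun n => poch a n * poch b n / poch d n * x ^ n / INR (fact n)).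

Definition F32 (a b c d e x : R) : R :=
  Series (fun n => poch a n * poch b n * poch c n / (poch d n * poch e n)
                   * x ^ n / INR (fact n)).

From Stdlib Require Import Reals Factorial Binomial Lia Lra.
From Coquelicot Require Import Coquelicot.
Open Scope R_scope.

(* Put [z = (1 - sqrt (1 - x)) / 2], so that [x = 4 z (1 - z)].  Termwise, the
   3F2 series is [D(k1,k2)(z (1 - z)) / C(k1+k2, k1)] and
   [k2 * 2F1(1, k1+k2; k1+1; y)] is [(k1+k2) N(k1,k2)(y) / C(k1+k2, k1)], where
     D(a,b)(w) = sum_n C(a+b+2n, a+n) w^n       ([central_series]),
     N(a,b)(y) = sum_m C(a+b-1+m, a+m) y^m      ([negbin_tail]).
   Both families obey Pascal's rule in [(a, b)], so by induction on [a + b] the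
   relations
     (1 - 2z) D(a,b)(z(1-z)) = N(a,b)(z) + N(b,a)(z),
     N(a,b)(1-z) + N(b,a)(z) = z^-b (1-z)^-a
   reduce to the boundary cases [a = 0] or [b = 0].  There [N] is a negative
   binomial series, and [D(0,b)] is determined, again through Pascal's rule, by
   the central binomial series [D(0,0)(w) = 1 / sqrt (1 - 4w)], the solution of
   [(1 - 4w) f' = 2f] with [f(0) = 1].  The first relation is the second formula
   of the theorem; eliminating [N(k2,k1)] with the second one gives the first. *)

(* [Binomial.C n k] does not vanish for [k > n] (the subtraction in its
   definition is truncated), hence the guard. *)
Definition binom (n k : nat) : R := if (k <=? n)%nat then Binomial.C n k else 0.

Lemma binom_fact n k : (k <= n)%nat ->
  binom n k = INR (fact n) / (INR (fact k) * INR (fact (n - k))).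
Proof. intros H. unfold binom. now rewrite (proj2 (Nat.leb_le _ _) H). Qed.

Lemma binom_gt n k : (n < k)%nat -> binom n k = 0.
Proof. intros H. unfold binom. now rewrite (proj2 (Nat.leb_gt _ _) H). Qed.

Lemma binom_pos n k : (k <= n)%nat -> 0 < binom n k.
Proof.
  intros H. rewrite binom_fact by exact H.
  apply Rdiv_lt_0_compat; [|apply Rmult_lt_0_compat]; apply INR_fact_lt_0.
Qed.

Lemma binom_n0 n : binom n 0 = 1.
Proof.
  rewrite binom_fact, Nat.sub_0_r by lia. change (INR (fact 0)) with 1.
  field. apply INR_fact_neq_0.
Qed.

Lemma binom_nn n : binom n n = 1.
Proof.
  rewrite binom_fact, Nat.sub_diag by lia. change (INR (fact 0)) with 1.
  field. apply INR_fact_neq_0.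
Qed.

Lemma binom_sym n k : (k <= n)%nat -> binom n k = binom n (n - k).
Proof.
  intros H. rewrite !binom_fact by lia.
  replace (n - (n - k))%nat with k by lia. now rewrite Rmult_comm.
Qed.

Lemma binom_pascal n k : binom (S n) (S k) = binom n k + binom n (S k).
Proof.
  destruct (Compare_dec.lt_eq_lt_dec k n) as [[H|H]|H].
  - unfold binom.
    rewrite (proj2 (Nat.leb_le (S k) (S n))), (proj2 (Nat.leb_le k n)),
      (proj2 (Nat.leb_le (S k) n)) by lia.
    symmetry. now apply pascal.
  - subst. rewrite !binom_nn, (binom_gt n (S n)) by lia. ring.
  - rewrite !binom_gt by lia. ring.
Qed.

Lemma binom_bounds n k : 0 <= binom n k <= 2 ^ n.
Proof.
  revert k. induction n as [|n IH]; intros [|k].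
  - rewrite binom_n0. simpl. lra.
  - rewrite binom_gt by lia. simpl. lra.
  - rewrite binom_n0. pose proof (pow_R1_Rle 2 (S n)). lra.
  - rewrite binom_pascal. specialize (IH k) as H1. specialize (IH (S k)) as H2.
    simpl. lra.
Qed.

Lemma hockey_stick c m :
  sum_f_R0 (fun k => binom (c + k) k) m = binom (S c + m) m.
Proof.
  induction m as [|m IH].
  - simpl. now rewrite !binom_n0.
  - rewrite tech5, IH.
    replace (S c + S m)%nat with (S (c + S m)) by lia.
    rewrite binom_pascal. replace (c + S m)%nat with (S c + m)%nat by lia. ring.
Qed.

Lemma pascal_ind (P : nat -> nat -> Prop) :
  (forall b, P 0%nat (S b)) -> (forall a, P (S a) 0%nat) ->
  (forall a b, P a (S b) -> P (S a) b -> P (S a) (S b)) ->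
  forall a b, (1 <= a + b)%nat -> P a b.
Proof.
  intros H0b Ha0 Hstep.
  assert (H : forall n a b, (a + b)%nat = S n -> P a b).
  { induction n as [|n IH]; intros [|a] [|b] E; try lia; auto.
    apply Hstep; apply IH; lia. }
  intros a b Hab. apply (H (pred (a + b))). lia.
Qed.

Lemma PSeries_split (c c1 c2 : nat -> R) x :
  (forall n, c n = c1 n + c2 n) ->
  ex_series (fun n => c1 n * x ^ n) -> ex_series (fun n => c2 n * x ^ n) ->
  PSeries c x = PSeries c1 x + PSeries c2 x.
Proof.
  intros Hc H1 H2. unfold PSeries. rewrite <- Series_plus by assumption.
  apply Series_ext. intros n. rewrite Hc. ring.
Qed.

Lemma ex_series_split (c c1 c2 : nat -> R) x :
  (forall n, c n = c1 n + c2 n) ->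
  ex_series (fun n => c1 n * x ^ n) -> ex_series (fun n => c2 n * x ^ n) ->
  ex_series (fun n => c n * x ^ n).
Proof.
  intros Hc H1 H2. eapply ex_series_ext; [|exact (ex_series_plus _ _ H1 H2)].
  intros n. rewrite Hc, Rmult_plus_distr_r. reflexivity.
Qed.

Lemma ex_series_pow_bounded (c : nat -> R) M q w :
  (forall n, Rabs (c n) <= M * q ^ n) -> 0 <= q -> q * Rabs w < 1 ->
  ex_series (fun n => c n * w ^ n).
Proof.
  intros Hc Hq Hw.
  apply (@ex_series_le R_AbsRing R_CompleteNormedModule _ (fun n => M * (q * Rabs w) ^ n)).
  - intros n. change (norm (c n * w ^ n)) with (Rabs (c n * w ^ n)).
    rewrite Rabs_mult, <- RPow_abs, Rpow_mult_distr, <- Rmult_assoc.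
    apply Rmult_le_compat_r; [apply pow_le, Rabs_pos|apply Hc].
  - apply (@ex_series_scal_l R_AbsRing R_CompleteNormedModule), ex_series_geom.
    rewrite Rabs_pos_eq; [|apply Rmult_le_pos, Rabs_pos]; assumption.
Qed.

Lemma ex_series_Rabs_of_nonneg (u : nat -> R) l :
  (forall n, 0 <= u n) -> is_series u l -> ex_series (fun n => Rabs (u n)).
Proof.
  intros Hu Hl. exists l. eapply is_series_ext; [|exact Hl].
  intros n. symmetry. apply Rabs_pos_eq, Hu.
Qed.

(* Cauchy product with the geometric series; the convolution is a hockey stick sum. *)
Lemma is_series_negbin c y : 0 <= y < 1 ->
  is_series (fun m => binom (c + m) m * y ^ m) (/ (1 - y) ^ S c).
Proof.
  intros Hy. assert (Hgeom := is_series_geom y ltac:(rewrite Rabs_pos_eq; lra)).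
  assert (Hpow : forall n, 0 <= y ^ n) by (intros; apply pow_le; lra).
  induction c as [|c IH].
  - eapply is_series_ext; [|rewrite pow_1; exact Hgeom].
    intros n. simpl. rewrite binom_nn. ring.
  - assert (Hterm : forall m, 0 <= binom (c + m) m * y ^ m)
      by (intros; apply Rmult_le_pos; [apply binom_bounds|apply Hpow]).
    pose proof (is_series_mult _ _ _ _ IH Hgeom
                  (ex_series_Rabs_of_nonneg _ _ Hterm IH)
                  (ex_series_Rabs_of_nonneg _ _ Hpow Hgeom)) as Hprod.
    replace (/ (1 - y) ^ S (S c)) with (/ (1 - y) ^ S c * / (1 - y))
      by (simpl; field; split; [apply pow_nonzero|]; lra).
    eapply is_series_ext; [|exact Hprod].
    intros m. cbv beta. rewrite (sum_eq _ (fun k => binom (c + k) k * y ^ m)).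
    + rewrite <- scal_sum, hockey_stick. apply Rmult_comm.
    + intros k Hk. rewrite Rmult_assoc, <- pow_add. do 2 f_equal. lia.
Qed.

(* [y ^ a * negbin_tail a b y] is the tail [sum_(m >= a)] of the negative
   binomial series [(1 - y) ^ (-b) = sum_m C(b - 1 + m, m) y ^ m]. *)
Definition negbin_tail_coef (a b m : nat) : R := binom (a + b - 1 + m) (a + m).

Definition negbin_tail (a b : nat) (y : R) : R := PSeries (negbin_tail_coef a b) y.

Lemma negbin_tail_coef_pascal a b m :
  negbin_tail_coef (S a) (S b) m
  = negbin_tail_coef a (S b) m + negbin_tail_coef (S a) b m.
Proof.
  unfold negbin_tail_coef.
  replace (S a + S b - 1 + m)%nat with (S (a + b + m)) by lia.
  replace (S a + m)%nat with (S (a + m)) by lia.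
  rewrite binom_pascal. f_equal; f_equal; lia.
Qed.

Lemma negbin_tail_coef_0l b m : negbin_tail_coef 0 (S b) m = binom (b + m) m.
Proof. unfold negbin_tail_coef. f_equal. lia. Qed.

Lemma negbin_tail_coef_0r a m : negbin_tail_coef (S a) 0 m = 0.
Proof. apply binom_gt. lia. Qed.

Lemma ex_series_negbin_tail y : 0 <= y < 1 -> forall a b, (1 <= a + b)%nat ->
  ex_series (fun m => negbin_tail_coef a b m * y ^ m).
Proof.
  intros Hy. apply pascal_ind.
  - intros b. eexists. eapply is_series_ext; [|exact (is_series_negbin b y Hy)].
    intros m. now rewrite negbin_tail_coef_0l.
  - intros a. eapply ex_series_ext.
    2: apply (@ex_series_scal_l R_AbsRing R_NormedModule 0 (fun n => y ^ n)), ex_series_geom.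
    + intros m. rewrite negbin_tail_coef_0r. reflexivity.
    + rewrite Rabs_pos_eq; lra.
  - intros a b H1 H2. exact (ex_series_split _ _ _ _ (negbin_tail_coef_pascal a b) H1 H2).
Qed.

Lemma negbin_tail_0l b y : 0 <= y < 1 -> negbin_tail 0 (S b) y = / (1 - y) ^ S b.
Proof.
  intros Hy. apply is_series_unique. eapply is_series_ext; [|exact (is_series_negbin b y Hy)].
  intros m. now rewrite negbin_tail_coef_0l.
Qed.

Lemma negbin_tail_0r a y : negbin_tail (S a) 0 y = 0.
Proof.
  unfold negbin_tail. rewrite <- (PSeries_const_0 y).
  apply PSeries_ext, negbin_tail_coef_0r.
Qed.

Lemma negbin_tail_pascal y a b : 0 <= y < 1 ->
  negbin_tail (S a) (S b) y = negbin_tail a (S b) y + negbin_tail (S a) b y.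
Proof.
  intros Hy. apply PSeries_split; [apply negbin_tail_coef_pascal|..];
    apply ex_series_negbin_tail; auto; lia.
Qed.

Lemma negbin_tail_reflection z : 0 < z < 1 -> forall a b, (1 <= a + b)%nat ->
  negbin_tail a b (1 - z) + negbin_tail b a z = / (z ^ b * (1 - z) ^ a).
Proof.
  intros Hz. apply pascal_ind.
  - intros b. rewrite negbin_tail_0l, negbin_tail_0r by lra.
    replace (1 - (1 - z)) with z by ring. rewrite pow_O, Rmult_1_r. ring.
  - intros a. rewrite negbin_tail_0l, negbin_tail_0r by lra.
    rewrite pow_O, Rmult_1_l. ring.
  - intros a b H1 H2. rewrite !negbin_tail_pascal by lra.
    replace (negbin_tail a (S b) (1 - z) + negbin_tail (S a) b (1 - z)
             + (negbin_tail b (S a) z + negbin_tail (S b) a z))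
      with ((negbin_tail a (S b) (1 - z) + negbin_tail (S b) a z)
            + (negbin_tail (S a) b (1 - z) + negbin_tail b (S a) z)) by ring.
    rewrite H1, H2. simpl pow.
    assert (0 < z ^ b) by (apply pow_lt; lra).
    assert (0 < (1 - z) ^ a) by (apply pow_lt; lra).
    field. repeat split; nra.
Qed.

Definition central_binom (n : nat) : R := binom (2 * n) n.

Lemma central_binom_succ n :
  INR (S n) * central_binom (S n) = (4 * INR n + 2) * central_binom n.
Proof.
  unfold central_binom. rewrite !binom_fact by lia.
  replace (2 * S n - S n)%nat with (S n) by lia.
  replace (2 * n - n)%nat with n by lia.
  replace (2 * S n)%nat with (S (S (2 * n))) by lia.
  rewrite !fact_simpl, !mult_INR, !S_INR, mult_INR. simpl (INR 2).
  pose proof (INR_fact_lt_0 n). pose proof (INR_fact_lt_0 (2 * n)). pose proof (pos_INR n).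
  field. split; lra.
Qed.

Lemma central_binom_in_radius t : Rabs t < 1/4 ->
  Rbar_lt (Rabs t) (CV_radius central_binom).
Proof.
  intros Ht. apply (Rbar_lt_le_trans _ (1/4)); [exact Ht|].
  apply (proj1 (CV_radius_bounded central_binom)). exists 1. intros n.
  pose proof (binom_bounds (2 * n) n) as Hb. rewrite pow_mult in Hb.
  unfold central_binom.
  rewrite Rabs_pos_eq by (apply Rmult_le_pos; [lra|apply pow_le; lra]).
  apply (Rle_trans _ ((2 ^ 2) ^ n * (1/4) ^ n)).
  - apply Rmult_le_compat_r; [apply pow_le; lra|apply Hb].
  - rewrite <- Rpow_mult_distr. replace (2 ^ 2 * (1/4)) with 1 by field.
    rewrite pow1. lra.
Qed.

Lemma central_binom_ode t : Rabs t < 1/4 ->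
  (1 - 4 * t) * PSeries (PS_derive central_binom) t = 2 * PSeries central_binom t.
Proof.
  intros Ht.
  assert (Ed : ex_pseries (PS_derive central_binom) t)
    by (apply ex_pseries_derive, central_binom_in_radius, Ht).
  rewrite Rmult_minus_distr_r, Rmult_1_l, Rmult_assoc, <- PSeries_incr_1.
  rewrite <- (PSeries_scal 4), <- PSeries_minus.
  2: exact Ed.
  2: { apply ex_pseries_scal; [apply Rmult_comm|]. apply ex_pseries_incr_1, Ed. }
  rewrite <- (PSeries_scal 2). apply PSeries_ext. intros n.
  unfold PS_minus, PS_scal, PS_incr_1, PS_derive.
  change (@plus R_NormedModule) with Rplus. change (@opp R_NormedModule) with Ropp.
  change (@scal R_AbsRing R_NormedModule) with Rmult.
  destruct n as [|n].
  - pose proof (central_binom_succ 0). change (@zero R_NormedModule) with 0.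
    simpl INR in *. lra.
  - pose proof (central_binom_succ (S n)). rewrite S_INR in *. lra.
Qed.

Lemma central_binom_sqrt_derive t : Rabs t < 1/4 ->
  is_derive (fun t => PSeries central_binom t * sqrt (1 - 4 * t)) t 0.
Proof.
  intros Ht.
  assert (Hpos : 0 < 1 - 4 * t) by (apply Rabs_def2 in Ht; lra).
  pose proof (sqrt_lt_R0 _ Hpos) as Hsq0.
  pose proof (is_derive_PSeries _ _ (central_binom_in_radius t Ht)) as Hf.
  assert (Hg : is_derive (fun t => sqrt (1 - 4 * t)) t (-2 / sqrt (1 - 4 * t))).
  { auto_derive; [lra|]. replace (1 + - (4 * t)) with (1 - 4 * t) by ring.
    field. lra. }
  pose proof (is_derive_mult _ _ _ _ _ Hf Hg ltac:(intros; apply Rmult_comm)) as Hfg.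
  change (@mult R_AbsRing) with Rmult in Hfg. change (@plus R_AbsRing) with Rplus in Hfg.
  replace 0 with (PSeries (PS_derive central_binom) t * sqrt (1 - 4 * t)
                  + PSeries central_binom t * (-2 / sqrt (1 - 4 * t))); [exact Hfg|].
  pose proof (central_binom_ode t Ht) as Hode.
  apply (Rmult_eq_reg_r (sqrt (1 - 4 * t))); [|lra].
  field_simplify; [|lra]. rewrite pow2_sqrt by lra. lra.
Qed.

Lemma central_binom_series w : Rabs w < 1/4 ->
  PSeries central_binom w = / sqrt (1 - 4 * w).
Proof.
  intros Hw.
  set (h := fun t => PSeries central_binom t * sqrt (1 - 4 * t)).
  assert (Hh' : forall t, Rabs (t - 0) <= Rabs w -> is_derive h t 0).
  { intros t Ht. apply central_binom_sqrt_derive. rewrite Rminus_0_r in Ht. lra. }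
  destruct (MVT_cor4 h (fun _ => 0) 0 (Rabs w) Hh' w ltac:(rewrite Rminus_0_r; lra))
    as [c [Hc _]].
  assert (Hh0 : h 0 = 1).
  { unfold h. rewrite PSeries_0, Rmult_0_r, Rminus_0_r, sqrt_1.
    unfold central_binom. rewrite binom_n0. ring. }
  assert (Hpos : 0 < 1 - 4 * w) by (apply Rabs_def2 in Hw; lra).
  pose proof (sqrt_lt_R0 _ Hpos).
  unfold h in Hc, Hh0. rewrite Hh0 in Hc.
  apply (Rmult_eq_reg_r (sqrt (1 - 4 * w))); [|lra].
  rewrite Rinv_l by lra. lra.
Qed.

Definition central_coef (a b n : nat) : R := binom (a + b + 2 * n) (a + n).

Definition central_series (a b : nat) (w : R) : R := PSeries (central_coef a b) w.

Lemma central_coef_comm a b n : central_coef a b n = central_coef b a n.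
Proof. unfold central_coef. rewrite binom_sym by lia. f_equal; lia. Qed.

Lemma central_series_comm a b w : central_series a b w = central_series b a w.
Proof. apply PSeries_ext, central_coef_comm. Qed.

Lemma central_coef_pascal a b n :
  central_coef (S a) (S b) n = central_coef a (S b) n + central_coef (S a) b n.
Proof.
  unfold central_coef.
  replace (S a + S b + 2 * n)%nat with (S (a + S b + 2 * n)) by lia.
  replace (S a + n)%nat with (S (a + n)) by lia.
  rewrite binom_pascal. f_equal; f_equal; lia.
Qed.

Lemma central_coef_bound a b n : Rabs (central_coef a b n) <= 2 ^ (a + b) * 4 ^ n.
Proof.
  pose proof (binom_bounds (a + b + 2 * n) (a + n)) as Hb.
  rewrite pow_add, pow_mult in Hb. replace (2 ^ 2) with 4 in Hb by ring.
  unfold central_coef. rewrite Rabs_pos_eq; apply Hb.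
Qed.

Lemma ex_series_central a b w : Rabs w < 1/4 ->
  ex_series (fun n => central_coef a b n * w ^ n).
Proof.
  intros Hw. apply (ex_series_pow_bounded _ (2 ^ (a + b)) 4); [apply central_coef_bound|lra..].
Qed.

Lemma central_series_pascal a b w : Rabs w < 1/4 ->
  central_series (S a) (S b) w = central_series a (S b) w + central_series (S a) b w.
Proof.
  intros Hw. apply PSeries_split; [apply central_coef_pascal|apply ex_series_central, Hw..].
Qed.

Lemma central_series_shift a b w : Rabs w < 1/4 ->
  central_series a b w
  = central_coef a b 0 + w * PSeries (fun n => central_coef a b (S n)) w.
Proof.
  intros Hw. unfold central_series, PSeries.
  rewrite Series_incr_1 by (apply ex_series_central, Hw).
  rewrite <- Series_scal_l, pow_O, Rmult_1_r. f_equal.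
  apply Series_ext. intros n. simpl pow. ring.
Qed.

Lemma central_series_0_0 w : Rabs w < 1/4 ->
  central_series 0 0 w = 1 + 2 * w * central_series 0 1 w.
Proof.
  intros Hw. rewrite central_series_shift by exact Hw.
  unfold central_coef at 1. rewrite binom_n0. f_equal.
  rewrite (Rmult_comm 2 w), Rmult_assoc. f_equal.
  unfold central_series, PSeries. rewrite <- Series_scal_l.
  apply Series_ext. intros n. unfold central_coef.
  replace (0 + 0 + 2 * S n)%nat with (S (0 + 1 + 2 * n)) by lia.
  replace (0 + S n)%nat with (S (0 + n)) by lia.
  rewrite binom_pascal, (binom_sym _ (S (0 + n))) by lia.
  replace (0 + 1 + 2 * n - S (0 + n))%nat with (0 + n)%nat by lia. ring.
Qed.

Lemma central_series_0_succ w j : Rabs w < 1/4 ->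
  central_series 0 (S j) w = central_series 0 j w + w * central_series 0 (S (S j)) w.
Proof.
  intros Hw. rewrite (central_series_shift 0 (S j)), (central_series_shift 0 j) by exact Hw.
  unfold central_coef at 1 3. rewrite !binom_n0, Rplus_assoc, <- Rmult_plus_distr_l.
  apply Rplus_eq_compat_l, Rmult_eq_compat_l. unfold central_series.
  apply PSeries_split; [intros n|..].
  - unfold central_coef.
    replace (0 + S j + 2 * S n)%nat with (S (0 + S (S j) + 2 * n)) by lia.
    replace (0 + j + 2 * S n)%nat with (0 + S (S j) + 2 * n)%nat by lia.
    replace (0 + S n)%nat with (S (0 + n)) by lia.
    rewrite binom_pascal. ring.
  - apply (ex_series_pow_bounded _ (2 ^ (0 + j) * 4) 4); [intros n|lra..].
    rewrite Rmult_assoc, tech_pow_Rmult. apply central_coef_bound.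
  - apply ex_series_central, Hw.
Qed.

Lemma central_series_0_closed z : 0 < z < 1/2 -> forall j,
  central_series 0 j (z * (1 - z)) = / ((1 - z) ^ j * (1 - 2 * z)).
Proof.
  intros Hz. set (w := z * (1 - z)).
  assert (Hw : Rabs w < 1/4) by (unfold w; rewrite Rabs_pos_eq; nra).
  assert (Hw0 : w <> 0) by (unfold w; nra).
  assert (H0 : central_series 0 0 w = / (1 - 2 * z)).
  { change (central_series 0 0 w) with (PSeries central_binom w).
    rewrite central_binom_series by exact Hw. f_equal.
    replace (1 - 4 * w) with ((1 - 2 * z) ^ 2) by (unfold w; ring).
    apply sqrt_pow2. lra. }
  assert (H1 : central_series 0 1 w = / ((1 - z) * (1 - 2 * z))).
  { pose proof (central_series_0_0 w Hw) as Hrec. rewrite H0 in Hrec.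
    apply (Rmult_eq_reg_l (2 * w)); [|lra].
    replace (2 * w * central_series 0 1 w) with (/ (1 - 2 * z) - 1) by lra.
    unfold w. field. lra. }
  assert (Hpair : forall j,
    central_series 0 j w = / ((1 - z) ^ j * (1 - 2 * z)) /\
    central_series 0 (S j) w = / ((1 - z) ^ S j * (1 - 2 * z))).
  { induction j as [|j [IH1 IH2]].
    - rewrite pow_O, pow_1, Rmult_1_l. split; assumption.
    - split; [exact IH2|].
      pose proof (central_series_0_succ w j Hw) as Hrec. rewrite IH1, IH2 in Hrec.
      apply (Rmult_eq_reg_l w); [|exact Hw0].
      replace (w * central_series 0 (S (S j)) w)
        with (/ ((1 - z) ^ S j * (1 - 2 * z)) - / ((1 - z) ^ j * (1 - 2 * z))) by lra.
      assert (0 < (1 - z) ^ j) by (apply pow_lt; lra).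
      unfold w. simpl pow. field. repeat split; lra. }
  intros j. apply Hpair.
Qed.

Lemma central_series_split z : 0 < z < 1/2 -> forall a b, (1 <= a + b)%nat ->
  (1 - 2 * z) * central_series a b (z * (1 - z))
  = negbin_tail a b z + negbin_tail b a z.
Proof.
  intros Hz.
  assert (Hw : Rabs (z * (1 - z)) < 1/4) by (rewrite Rabs_pos_eq; nra).
  assert (Hnz : forall b, (1 - 2 * z) * central_series 0 (S b) (z * (1 - z))
                          = / (1 - z) ^ S b).
  { intros b. rewrite central_series_0_closed by exact Hz.
    field. split; [apply pow_nonzero|]; lra. }
  apply pascal_ind.
  - intros b. rewrite Hnz, negbin_tail_0l, negbin_tail_0r by lra. ring.
  - intros a. rewrite central_series_comm, Hnz, negbin_tail_0l, negbin_tail_0r by lra. ring.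
  - intros a b H1 H2.
    rewrite central_series_pascal, Rmult_plus_distr_l, H1, H2 by exact Hw.
    rewrite !negbin_tail_pascal by lra. ring.
Qed.

Lemma poch_one n : poch 1 n = INR (fact n).
Proof.
  induction n as [|n IH]; [reflexivity|].
  simpl poch. rewrite IH, fact_simpl, mult_INR, S_INR. ring.
Qed.

Lemma poch_nat_succ k n : poch (INR k + 1) n = INR (fact (k + n)) / INR (fact k).
Proof.
  induction n as [|n IH].
  - rewrite Nat.add_0_r. simpl. field. apply INR_fact_neq_0.
  - simpl poch. rewrite IH, <- plus_n_Sm, fact_simpl, mult_INR, S_INR, plus_INR.
    field. apply INR_fact_neq_0.
Qed.

Lemma poch_duplication K n :
  poch (INR K / 2 + 1) n * poch ((INR K + 1) / 2) n
  = INR (fact (K + 2 * n)) / (INR (fact K) * 4 ^ n).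
Proof.
  induction n as [|n IH].
  - rewrite Nat.add_0_r. simpl. field. apply INR_fact_neq_0.
  - simpl poch.
    transitivity (poch (INR K / 2 + 1) n * poch ((INR K + 1) / 2) n
                  * ((INR K / 2 + 1 + INR n) * ((INR K + 1) / 2 + INR n))); [ring|].
    rewrite IH. replace (K + 2 * S n)%nat with (S (S (K + 2 * n))) by lia.
    rewrite !fact_simpl, !mult_INR, !S_INR, plus_INR, mult_INR. simpl (INR 2).
    rewrite <- tech_pow_Rmult.
    field. split; [apply pow_nonzero; lra|apply INR_fact_neq_0].
Qed.

Lemma F32_central_series k1 k2 x :
  let K := INR (k1 + k2) in
  F32 1 (K / 2 + 1) ((K + 1) / 2) (INR k1 + 1) (INR k2 + 1) x
  = central_series k1 k2 (x / 4) / binom (k1 + k2) k1.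
Proof.
  intros K. unfold F32, central_series, PSeries.
  transitivity (Series (fun n => central_coef k1 k2 n * (x / 4) ^ n * / binom (k1 + k2) k1));
    [|apply Series_scal_r].
  apply Series_ext. intros n.
  unfold K. rewrite Rmult_assoc with (r1 := poch 1 n), poch_duplication, poch_one, !poch_nat_succ.
  unfold central_coef. rewrite !binom_fact by lia.
  replace (k1 + k2 + 2 * n - (k1 + n))%nat with (k2 + n)%nat by lia.
  replace (k1 + k2 - k1)%nat with k2 by lia.
  replace ((x / 4) ^ n) with (x ^ n / 4 ^ n)
    by (unfold Rdiv; rewrite Rpow_mult_distr, pow_inv; reflexivity).
  pose proof (INR_fact_neq_0 n). pose proof (INR_fact_neq_0 k1).
  pose proof (INR_fact_neq_0 k2). pose proof (INR_fact_neq_0 (k1 + n)).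
  pose proof (INR_fact_neq_0 (k2 + n)). pose proof (INR_fact_neq_0 (k1 + k2)).
  pose proof (INR_fact_neq_0 (k1 + k2 + 2 * n)).
  field. repeat split; auto. apply pow_nonzero. lra.
Qed.

Lemma F21_negbin_tail k1 k2 y :
  INR k2 * F21 1 (INR (k1 + k2)) (INR k1 + 1) y
  = INR (k1 + k2) * negbin_tail k1 k2 y / binom (k1 + k2) k1.
Proof.
  unfold F21, negbin_tail, PSeries. rewrite <- Series_scal_l.
  transitivity (Series (fun m => INR (k1 + k2) / binom (k1 + k2) k1
                                 * (negbin_tail_coef k1 k2 m * y ^ m)));
    [|rewrite Series_scal_l; unfold Rdiv; ring].
  apply Series_ext. intros m. unfold negbin_tail_coef.
  destruct k2 as [|k2].
  - destruct k1 as [|k1]; unfold Rdiv.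
    + change (INR (0 + 0)) with 0. change (INR 0) with 0. ring.
    + rewrite (binom_gt _ (S k1 + m)) by lia. change (INR 0) with 0. ring.
  - rewrite poch_one.
    replace (INR (k1 + S k2)) with (INR (k1 + k2) + 1) by (rewrite <- S_INR; f_equal; lia).
    rewrite !poch_nat_succ, !binom_fact by lia.
    replace (k1 + S k2 - 1 + m - (k1 + m))%nat with k2 by lia.
    replace (k1 + S k2 - 1 + m)%nat with (k1 + k2 + m)%nat by lia.
    replace (k1 + S k2 - k1)%nat with (S k2) by lia.
    replace (k1 + S k2)%nat with (S (k1 + k2)) by lia.
    rewrite !fact_simpl, !mult_INR, !S_INR, plus_INR.
    pose proof (INR_fact_neq_0 m). pose proof (INR_fact_neq_0 k1).
    pose proof (INR_fact_neq_0 k2). pose proof (INR_fact_neq_0 (k1 + m)).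
    pose proof (INR_fact_neq_0 (k1 + k2)). pose proof (INR_fact_neq_0 (k1 + k2 + m)).
    pose proof (pos_INR k1). pose proof (pos_INR k2).
    field. repeat split; auto; lra.
Qed.

Lemma F21_negbin_tail_swap k1 k2 y :
  INR k1 * F21 1 (INR (k1 + k2)) (INR k2 + 1) y
  = INR (k1 + k2) * negbin_tail k2 k1 y / binom (k1 + k2) k1.
Proof.
  rewrite (Nat.add_comm k1 k2), F21_negbin_tail, (binom_sym (k2 + k1) k2) by lia.
  now replace (k2 + k1 - k2)%nat with k1 by lia.
Qed.

Lemma F21_reflection k1 k2 z : (1 <= k1 + k2)%nat -> 0 < z < 1 ->
  let K := INR (k1 + k2) in
  INR k1 * F21 1 K (INR k2 + 1) z + INR k2 * F21 1 K (INR k1 + 1) (1 - z)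
  = K / (binom (k1 + k2) k1 * (z ^ k2 * (1 - z) ^ k1)).
Proof.
  intros HK Hz K. unfold K.
  rewrite F21_negbin_tail_swap, F21_negbin_tail.
  pose proof (binom_pos (k1 + k2) k1 ltac:(lia)).
  transitivity (INR (k1 + k2) * (negbin_tail k1 k2 (1 - z) + negbin_tail k2 k1 z)
                / binom (k1 + k2) k1); [field; lra|].
  rewrite negbin_tail_reflection by assumption.
  field. repeat split; try apply pow_nonzero; lra.
Qed.

Lemma F32_as_F21 k1 k2 z : (1 <= k1 + k2)%nat -> 0 < z < 1/2 ->
  let K := INR (k1 + k2) in
  F32 1 (K / 2 + 1) ((K + 1) / 2) (INR k1 + 1) (INR k2 + 1) (4 * z * (1 - z))
  = (INR k2 * F21 1 K (INR k1 + 1) z + INR k1 * F21 1 K (INR k2 + 1) z)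
    / (K * (1 - 2 * z)).
Proof.
  intros HK Hz K. unfold K.
  rewrite F32_central_series, F21_negbin_tail, F21_negbin_tail_swap.
  replace (4 * z * (1 - z) / 4) with (z * (1 - z)) by field.
  pose proof (central_series_split z Hz k1 k2 HK) as Hsplit.
  pose proof (binom_pos (k1 + k2) k1 ltac:(lia)).
  pose proof (lt_0_INR (k1 + k2) ltac:(lia)).
  replace (central_series k1 k2 (z * (1 - z)))
    with ((negbin_tail k1 k2 z + negbin_tail k2 k1 z) / (1 - 2 * z))
    by (rewrite <- Hsplit; field; lra).
  field. repeat split; lra.
Qed.

Lemma leading_term_eq k1 k2 z : 0 < z < 1 ->
  INR (fact k1) * INR (fact k2) / INR (fact (k1 + k2))
    * (2 ^ (k1 + k2) / (4 * z * (1 - z)) ^ k2)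
    * powerRZ (2 * (1 - z)) (Z.of_nat k2 - Z.of_nat k1)
  = / (binom (k1 + k2) k1 * (z ^ k2 * (1 - z) ^ k1)).
Proof.
  intros Hz.
  unfold Z.sub. rewrite powerRZ_add, powerRZ_neg', <- !pow_powerRZ by lra.
  rewrite binom_fact by lia. replace (k1 + k2 - k1)%nat with k2 by lia.
  replace 4 with (2 * 2) by ring. rewrite !Rpow_mult_distr, pow_add.
  pose proof (INR_fact_neq_0 k1). pose proof (INR_fact_neq_0 k2).
  pose proof (INR_fact_neq_0 (k1 + k2)).
  field. repeat split; try apply pow_nonzero; lra.
Qed.

Lemma sqrt_substitution x z : 0 < x < 1 -> z = (1 - sqrt (1 - x)) / 2 ->
  0 < z < 1/2 /\ x = 4 * z * (1 - z) /\ sqrt (1 - x) = 1 - 2 * z.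
Proof.
  intros Hx Hz.
  pose proof (sqrt_lt_R0 (1 - x) ltac:(lra)).
  pose proof (sqrt_sqrt (1 - x) ltac:(lra)).
  subst z. repeat split; nra.
Qed.

Theorem theorem2 (k1 k2 : nat) (x : R) :
  (1 <= k1 + k2)%nat -> 0 < x < 1 ->
  let K := INR (k1 + k2) in
  let s := sqrt (1 - x) in
  let LHS := F32 1 (K / 2 + 1) ((K + 1) / 2) (INR k1 + 1) (INR k2 + 1) x in
  LHS =
    INR (fact k1) * INR (fact k2) / INR (fact (k1 + k2))
      * (2 ^ (k1 + k2) / x ^ k2)
      * (powerRZ (1 + s) (Z.of_nat k2 - Z.of_nat k1) / s)
    + INR k2 / (K * s)
      * (F21 1 K (INR k1 + 1) (1/2 - 1/2 * s)
         - F21 1 K (INR k1 + 1) (1/2 + 1/2 * s))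
  /\
  LHS =
    1 / (K * s)
      * (INR k2 * F21 1 K (INR k1 + 1) (1/2 - 1/2 * s)
         + INR k1 * F21 1 K (INR k2 + 1) (1/2 - 1/2 * s)).
Proof.
  intros HK Hx K s LHS.
  set (z := (1 - s) / 2).
  destruct (sqrt_substitution x z Hx eq_refl) as (Hz & Ex & Es). fold s in Es.
  replace (1/2 - 1/2 * s) with z by (unfold z; field).
  replace (1/2 + 1/2 * s) with (1 - z) by (unfold z; field).
  replace (1 + s) with (2 * (1 - z)) by (unfold z; field).
  assert (HL : LHS = (INR k2 * F21 1 K (INR k1 + 1) z + INR k1 * F21 1 K (INR k2 + 1) z)
                     / (K * s)).
  { unfold LHS. rewrite Ex, Es. now apply F32_as_F21. }
  assert (HKpos : 0 < K) by (apply lt_0_INR; lia).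
  rewrite HL. split.
  - rewrite Ex, Rmult_div_assoc, leading_term_eq by lra.
    pose proof (F21_reflection k1 k2 z HK ltac:(lra)) as Hrefl. cbv zeta in Hrefl.
    pose proof (binom_pos (k1 + k2) k1 ltac:(lia)).
    replace (INR k1 * F21 1 K (INR k2 + 1) z)
      with (K / (binom (k1 + k2) k1 * (z ^ k2 * (1 - z) ^ k1))
            - INR k2 * F21 1 K (INR k1 + 1) (1 - z)) by (unfold K; rewrite <- Hrefl; ring).
    field. repeat split; try apply pow_nonzero; lra.
  - field. lra.
Qed.
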